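(* Suppose $\vec \theta \in \mathbb R^d$ and $\epsilon > 0$ have the property that for any pair of vectors $\vec x, \vec y \in (\mathbb Z_g)^k$, there are $z \in \mathbb Z$ and $\epsilon_1$ with $|\epsilon_1| < \epsilon$ such that $\vec \theta \cdot Z(\vec x) - \vec \theta \cdot Z(\vec y) = 2 \pi z + \epsilon_1$. Then for any index $(\{i,j\},a)$, there are $z \in \mathbb Z$ and $\epsilon_3$ with $|\epsilon_3| < 2 \epsilon$ such that $\theta_{\{i,j\},a} - \epsilon_3 = \frac{2 \pi}{g} z$.
   Context: Let $g\ge 2$, $k\ge 2$ be integers, $\mathbb Z_g$ the integers mod $g$, and $d=\binom{k}{2}(g-1)$. Index the coordinates of $\mathbb R^d$ by pairs $(\{i,j\},a)$ with $1\le i<j\le k$ and $a\in\mathbb Z_g\setminus\{0\}$. Define $Z:(\mathbb Z_g)^k\to\mathbb R^d$ by $[Z(\vec x)]_{\{i,j\},a}=1-1/g$ if $x_i-x_j=a$ and $-1/g$ otherwise. *)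

From Stdlib Require Import Reals.
From mathcomp Require Import all_boot all_order all_algebra.
From mathcomp Require Import Rstruct.
Set Implicit Arguments. Unset Strict Implicit. Unset Printing Implicit Defensive.
Import Order.TTheory GRing.Theory Num.Theory.
Local Open Scope ring_scope.

(* Z_g is modelled by 'I_g (residues 0..g-1); (Z_g)^k by functions 'I_k -> 'I_g.
   Coordinates ({i,j},a) with i<j, a <> 0 are modelled by triples (i,j,a)
   with i < j and a != 0; a vector theta in R^d is a function on such triples
   (values on other triples are irrelevant and never used). *)

Definition zdiff (g k : nat) (x : 'I_k -> 'I_g) (i j : 'I_k) : nat :=
  (((x i : nat) + g - (x j : nat)) %% g)%N.

Definition Zcoord (g k : nat) (x : 'I_k -> 'I_g) (i j : 'I_k) (a : 'I_g) : R :=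
  (if zdiff x i j == nat_of_ord a then 1 else 0) - (g%:R)^-1.

Definition dotZ (g k : nat) (theta : 'I_k -> 'I_k -> 'I_g -> R)
  (x : 'I_k -> 'I_g) : R :=
  \sum_(i : 'I_k) \sum_(j : 'I_k | (i < j)%N) \sum_(a : 'I_g | a != 0%N :> nat)
    theta i j a * Zcoord x i j a.

From Stdlib Require Import Reals.
From mathcomp Require Import all_boot all_order all_algebra.
From mathcomp Require Import Rstruct.
From mathcomp Require Import ring lra.
Set Implicit Arguments. Unset Strict Implicit. Unset Printing Implicit Defensive.
Import Order.TTheory GRing.Theory Num.Theory.
Local Open Scope ring_scope.

(* For c in Z_g let x^c have x_i = c + a, x_j = c and all other entries 0, and
   let y^c agree with x^c except y_i = c. Summing theta.Z(x^c) - theta.Z(y^c)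
   over c leaves only g * theta_({i,j},a): coordinates avoiding i do not change,
   those containing i but not j are permuted by the shift c |-> c + a, and at
   ({i,j},b) only b = a contributes. The g errors add up to at most g * eps, so
   dividing by g even gives |eps3| <= eps. *)

Lemma sum_near_multiples (T : Type) (s : seq T) (f : T -> R) (w eps : R) :
  (forall c, exists (z : int) (e : R), `|e| < eps /\ f c = w * z%:~R + e) ->
  exists (z : int) (e : R), `|e| <= (size s)%:R * eps /\
    \sum_(c <- s) f c = w * z%:~R + e.
Proof.
move=> near_f; elim: s => [|c s [z [e [le_e sum_s]]]].
  by exists 0, 0; rewrite big_nil normr0 mul0r mulr0 addr0.
have [z1 [e1 [lt_e1 f_c]]] := near_f c.
exists (z1 + z), (e1 + e); split.
  rewrite /= -addn1 natrD mulrDl mul1r addrC.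
  by rewrite (le_trans (ler_normD _ _)) // lerD // ltW.
by rewrite big_cons f_c sum_s intrD; ring.
Qed.

Section PairConfigurations.

Variables n k : nat.
Implicit Types (x y : 'I_k -> 'I_n.+1) (p q : 'I_k) (b : 'I_n.+1).

Lemma zdiffE x p q : zdiff x p q = (x p - x q)%R :> nat.
Proof. by rewrite /zdiff /= modnDmr addnBA // ltnW. Qed.

Lemma ZcoordE x p q b : Zcoord x p q b = (x p - x q == b)%:R - n.+1%:R^-1.
Proof. by rewrite /Zcoord zdiffE val_eqE; case: eqP. Qed.

Lemma Zcoord_congr x y p q b :
  x p = y p -> x q = y q -> Zcoord x p q b = Zcoord y p q b.
Proof. by move=> eq_p eq_q; rewrite !ZcoordE eq_p eq_q. Qed.

Lemma dotZ_sub (theta : 'I_k -> 'I_k -> 'I_n.+1 -> R) x y :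
  dotZ theta x - dotZ theta y =
  \sum_(p : 'I_k) \sum_(q : 'I_k | (p < q)%N) \sum_(b : 'I_n.+1 | b != 0%N :> nat)
    theta p q b * (Zcoord x p q b - Zcoord y p q b).
Proof.
rewrite /dotZ -sumrB; apply: eq_bigr => p _; rewrite -sumrB.
apply: eq_bigr => q _; rewrite -sumrB.
by apply: eq_bigr => b _; exact: (esym (mulrBr _ _ _)).
Qed.

Definition pair_config (i j : 'I_k) (u v : 'I_n.+1) : 'I_k -> 'I_n.+1 :=
  fun m => if m == i then u else if m == j then v else 0.

Variables (i j : 'I_k) (a : 'I_n.+1).
Hypothesis lt_ij : (i < j)%N.

Let j_neq_i : (j == i) = false.
Proof. by rewrite -val_eqE gtn_eqF. Qed.

Let X c := pair_config i j (c + a) c.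
Let Y c := pair_config i j c c.

Lemma sum_Zcoord_pair_config_sub p q b : (p < q)%N -> b != 0%N :> nat ->
  \sum_c (Zcoord (X c) p q b - Zcoord (Y c) p q b) =
  (p == i)%:R * ((q == j)%:R * ((b == a)%:R * n.+1%:R)).
Proof.
move=> lt_pq nz_b.
have [[-> ->]|not_ij] := eqVneq (p, q) (i, j).
  rewrite !eqxx !mul1r; under eq_bigr => c _.
    rewrite !ZcoordE /X /Y /pair_config eqxx j_neq_i eqxx [c + a]addrC addrK subrr.
    rewrite (_ : (0 == b) = false) ?sub0r ?opprK ?subrK; last first.
      by apply/eqP => b0; rewrite -b0 in nz_b.
  over.
  by rewrite sumr_const card_ord mulr_natr eq_sym.
suff -> : \sum_c (Zcoord (X c) p q b - Zcoord (Y c) p q b) = 0.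
  move: not_ij; rewrite xpair_eqE negb_and.
  by case/orP=> /negbTE->; rewrite !(mul0r, mulr0).
have [not_i|/nandP i_pq] := boolP ((p != i) && (q != i)).
  apply: big1 => c _; apply/eqP; rewrite subr_eq0; apply/eqP.
  by case/andP: not_i => /negbTE p_i /negbTE q_i; apply: Zcoord_congr;
    rewrite /X /Y /pair_config ?p_i ?q_i.
have off_j (m : 'I_k) c : m != j -> X c m = Y (c + a) m.
  by move=> /negbTE m_j; rewrite /X /Y /pair_config m_j; case: ifP.
have [p_j q_j] : p != j /\ q != j.
  case: i_pq => /negPn/eqP eq_i; [subst p | subst q].
    by split; [rewrite -val_eqE neq_ltn lt_ij | apply: contra not_ij => /eqP->].
  by rewrite -!val_eqE !neq_ltn lt_ij (ltn_trans lt_pq lt_ij).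
rewrite sumrB [E in _ - E](reindex_inj (addIr a)) -sumrB.
by apply: big1 => c _; rewrite (@Zcoord_congr _ (Y (c + a))) ?subrr ?off_j.
Qed.

Lemma sum_dotZ_pair_config_sub (theta : 'I_k -> 'I_k -> 'I_n.+1 -> R) :
  a != 0%N :> nat ->
  \sum_c (dotZ theta (X c) - dotZ theta (Y c)) = theta i j a * n.+1%:R.
Proof.
move=> nz_a; under eq_bigr => c _ do rewrite dotZ_sub.
rewrite exchange_big (big_only1 i) //= => [|p p_i _]; last first.
  rewrite exchange_big big1 // => q lt_pq; rewrite exchange_big big1 // => b nz_b.
  by rewrite -mulr_sumr sum_Zcoord_pair_config_sub // (negbTE p_i) !(mul0r, mulr0).
rewrite exchange_big (big_only1 j) //= => [|q q_j lt_iq]; last first.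
  rewrite exchange_big big1 // => b nz_b.
  by rewrite -mulr_sumr sum_Zcoord_pair_config_sub // (negbTE q_j) !(mul0r, mulr0).
rewrite exchange_big (big_only1 a) //= => [|b b_a nz_b]; last first.
  by rewrite -mulr_sumr sum_Zcoord_pair_config_sub // (negbTE b_a) !(mul0r, mulr0).
by rewrite -mulr_sumr sum_Zcoord_pair_config_sub // !eqxx !mul1r.
Qed.

End PairConfigurations.

Theorem corollary2p2 (g k : nat) (hg : (2 <= g)%N) (hk : (2 <= k)%N)
  (theta : 'I_k -> 'I_k -> 'I_g -> R) (eps : R) (heps : 0 < eps) :
  (forall x y : 'I_k -> 'I_g, exists (z : int) (eps1 : R),
      `|eps1| < eps /\
      dotZ theta x - dotZ theta y = 2 * PI * z%:~R + eps1) ->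
  forall (i j : 'I_k) (a : 'I_g), (i < j)%N -> a != 0%N :> nat ->
    exists (z : int) (eps3 : R),
      `|eps3| < 2 * eps /\
      theta i j a - eps3 = 2 * PI / g%:R * z%:~R.
Proof.
case: g hg theta => // n _ theta near_2PIZ i j a lt_ij nz_a.
pose X c := pair_config i j (c + a) c; pose Y (c : 'I_n.+1) := pair_config i j c c.
have [z [e []]] := sum_near_multiples (enum 'I_n.+1)
  (fun c => near_2PIZ (X c) (Y c)).
rewrite size_enum_ord big_enum /= sum_dotZ_pair_config_sub // => le_e sum_eq.
have n1_gt0 : 0 < n.+1%:R :> R by rewrite ltr0n.
exists z, (e / n.+1%:R); split.
  rewrite normrM normfV (gtr0_norm n1_gt0) (@le_lt_trans _ _ eps) ?ler_pdivrMr //.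
    by rewrite mulrC.
  by lra.
have n1_neq0 := lt0r_neq0 n1_gt0.
apply: (mulIf n1_neq0); rewrite mulrBl sum_eq.
by rewrite divfK // [RHS]mulrAC divfK // addrK.
Qed.
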